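(* For all integers $N\ge 1$ and $k\ge 1$, $$\mathbb{E}[\mathcal{R}_{k+1}(N+1)]=\sum_{1\le j_1<j_2<\dots<j_k\le N}\frac{1}{j_1 j_2\cdots j_k},$$ (the sum being $0$ if $k>N$); moreover $\mathcal{R}_1(N)=1$ for all $N\ge1$. In particular $\mathbb{E}[\mathcal{R}_{N}(N)]=1/(N-1)!$ and $\mathbb{E}[\mathcal{R}_3(N+1)]=\tfrac12\big(H_N^2-H_N^{(2)}\big)$, where $H_N=\sum_{i\le N}1/i$, $H_N^{(2)}=\sum_{i\le N}1/i^2$.
   Context: A random recursive hypergraph (RRH) is the random hypergraph process defined as follows. At size $N=1$ it has vertex set $\{v_1\}$ and edge set $\{\{v_1\}\}$. Given the hypergraph of size $N$ (vertices $v_1,\dots,v_N$, exactly $N$ edges), one chooses an existing edge $e$ uniformly at random, independently of the past, and adds a new vertex $v_{N+1}$ together with the new edge $e\cup\{v_{N+1}\}$. The rank of a vertex $v$ is $\min\{|e| : v\in e\}$. $\mathcal{R}_k(N)$ denotes the number of vertices of rank $k$ in the RRH of size $N$ (equivalently, the number of edges of size $k$). *)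

From mathcomp Require Import all_boot all_order all_algebra.
Set Implicit Arguments. Unset Strict Implicit. Unset Printing Implicit Defensive.
Import Order.TTheory GRing.Theory Num.Theory.
Local Open Scope ring_scope.

(* A history of the RRH of size N is the list of choices h = [c_1; ...; c_(N-1)]
   where c_i (0-indexed edge number) is the edge chosen when passing from size i
   to size i+1, so 0 <= c_i < i. *)

(* All histories of length n (i.e. of the RRH of size n+1); each one has
   the same probability 1/n!, so the uniform law on this list is the law
   of the process. *)
Fixpoint hists (n : nat) : seq (seq nat) :=
  match n with
  | 0 => [:: [::]]
  | n'.+1 => flatten [seq [seq rcons h c | c <- iota 0 n'.+1] | h <- hists n']
  end.

(* Build the edge list: vertices are labelled 1..N (v_i is labelled i);
   edges are lists of vertices, edge number j is the j-th element. *)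
Fixpoint build (h : seq nat) (E : seq (seq nat)) : seq (seq nat) :=
  match h with
  | [::] => E
  | c :: h' => build h' (rcons E ((size E).+1 :: nth [::] E c))
  end.

Definition rrh (h : seq nat) : seq (seq nat) := build h [:: [:: 1]].

Definition has_rank (E : seq (seq nat)) (v k : nat) : bool :=
  has (fun e => (v \in e) && (size e == k)%N) E &&
  all (fun e => (v \in e) ==> (k <= size e)%N) E.

Definition Rk (k : nat) (h : seq nat) : nat :=
  count (fun v => has_rank (rrh h) v k) (iota 1 (size h).+1).

Definition ER (k N : nat) : rat :=
  (\sum_(h <- hists N.-1) (Rk k h)%:R) / (size (hists N.-1))%:R.

(* sum over 1 <= j_1 < ... < j_k <= N of 1/(j_1 ... j_k);
   element j : 'I_N stands for the integer j+1. *)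
Definition esum_inv (k N : nat) : rat :=
  \sum_(S : {set 'I_N} | #|S| == k) \prod_(j in S) ((j.+1)%:R)^-1.

Definition harm (N : nat) : rat := \sum_(1 <= i < N.+1) (i%:R)^-1.
Definition harm2 (N : nat) : rat := \sum_(1 <= i < N.+1) ((i ^ 2)%N%:R)^-1.

From mathcomp Require Import all_boot all_order all_algebra.
From mathcomp Require Import ring.
Set Implicit Arguments. Unset Strict Implicit. Unset Printing Implicit Defensive.
Import Order.TTheory GRing.Theory Num.Theory.

(* Vertex [v] is born with edge number [v.-1], its own edge, and every later
   edge containing [v] extends an earlier one containing [v]; so the rank of [v]
   is the size of its own edge and R_k(N) counts the edges of size k.  Choosing
   edge c adds an edge of size |e_c| + 1, hence the total S_k(n) of R_k over the
   n! equally likely histories satisfies S_(k+1)(n+1) = (n+1) S_(k+1)(n) + S_k(n).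
   Divided by (n+1)! this is the recursion e_k(N+1) = e_k(N) + e_(k-1)(N)/(N+1)
   of the elementary symmetric functions of 1, 1/2, ..., 1/N. *)

Lemma size_build h E : size (build h E) = size h + size E.
Proof. by elim: h E => // c h IH E /=; rewrite IH size_rcons addnS. Qed.

Lemma size_rrh h : size (rrh h) = (size h).+1.
Proof. by rewrite /rrh size_build addn1. Qed.

Lemma build_rcons h c E : build (rcons h c) E =
  rcons (build h E) ((size (build h E)).+1 :: nth [::] (build h E) c).
Proof. by elim: h E => // c' h IH E /=. Qed.

Lemma rrh_rcons h c :
  rrh (rcons h c) = rcons (rrh h) ((size h).+2 :: nth [::] (rrh h) c).
Proof. by rewrite /rrh build_rcons size_build addn1. Qed.

Lemma histsS n : hists n.+1 = [seq rcons h c | h <- hists n, c <- iota 0 n.+1].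
Proof. by []. Qed.

Lemma size_hists n : size (hists n) = n`!.
Proof. by elim: n => // n IH; rewrite histsS size_allpairs IH size_iota factS mulnC. Qed.

Lemma hists_ind (P : nat -> seq nat -> Prop) :
  P 0 [::] ->
  (forall n h c, h \in hists n -> c < n.+1 -> P n h -> P n.+1 (rcons h c)) ->
  forall n h, h \in hists n -> P n h.
Proof.
move=> P0 PS; elim=> [|n IH] h; first by rewrite inE => /eqP ->.
rewrite histsS => /allpairsP[[h0 c] [hn cn ->]].
by apply: PS hn _ (IH _ hn); rewrite mem_iota in cn.
Qed.

Lemma rcons_mem_hists n h c : h \in hists n -> c < n.+1 -> rcons h c \in hists n.+1.
Proof. by move=> hn cn; rewrite histsS allpairs_f // mem_iota. Qed.

Lemma size_mem_hists n h : h \in hists n -> size h = n.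
Proof. by move: n h; apply: hists_ind => // n h c _ _ <-; rewrite size_rcons. Qed.

Definition own_edge_minimal (E : seq (seq nat)) := forall j, j < size E ->
  j.+1 \in nth [::] E j /\
  forall v, v \in nth [::] E j ->
    0 < v <= j.+1 /\ size (nth [::] E v.-1) <= size (nth [::] E j).

Lemma own_edge_minimal_rcons E c : own_edge_minimal E -> c < size E ->
  own_edge_minimal (rcons E ((size E).+1 :: nth [::] E c)).
Proof.
move=> minE cE j; rewrite size_rcons ltnS leq_eqVlt => /orP[/eqP->|jE].
  rewrite nth_rcons ltnn eqxx mem_head; split=> // v.
  rewrite inE => /orP[/eqP->|vc]; first by rewrite /= nth_rcons ltnn eqxx.
  have [_ /(_ v vc) [/andP[v0 vc1] szv]] := minE c cE.
  have vE : v.-1 < size E by rewrite prednK // (leq_trans vc1).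
  have vS : v <= (size E).+1 by rewrite (leq_trans vc1) // ltnW.
  by rewrite v0 vS nth_rcons vE (leq_trans szv) // leqnSn.
have [jin minj] := minE j jE; rewrite nth_rcons jE; split=> // v vj.
have [/andP[v0 vj1] szv] := minj v vj.
have vE : v.-1 < size E by rewrite prednK // (leq_trans vj1).
by rewrite v0 vj1 nth_rcons vE.
Qed.

Lemma own_edge_minimal_rrh n h : h \in hists n -> own_edge_minimal (rrh h).
Proof.
move: n h; apply: hists_ind.
  by case=> // _; split=> // v; rewrite inE => /eqP->.
move=> n h c hn cn minh; rewrite rrh_rcons -(size_rrh h).
by apply: own_edge_minimal_rcons; rewrite // size_rrh (size_mem_hists hn).
Qed.

Lemma own_edge_size_gt0 E j : own_edge_minimal E -> j < size E ->
  0 < size (nth [::] E j).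
Proof. by move=> minE /minE[jin _]; case: (nth _ _ _) jin. Qed.

Lemma has_rank_own_edge E v k : own_edge_minimal E -> 0 < v <= size E ->
  has_rank E v k = (size (nth [::] E v.-1) == k).
Proof.
move=> minE /andP[v0 vE].
have vE' : v.-1 < size E by rewrite prednK.
have [vin _] := minE _ vE'; rewrite prednK // in vin.
apply/idP/eqP => [/andP[/hasP[e eE /andP[ve /eqP <-]] /allP minv] | <-].
  have [j jE ej] := nthP [::] eE; have [_ /(_ v)] := minE _ jE.
  rewrite ej => /(_ ve)[_ le_v_e].
  by apply/eqP; rewrite eqn_leq le_v_e (implyP (minv _ (mem_nth [::] vE')) vin).
apply/andP; split.
  by apply/hasP; exists (nth [::] E v.-1); rewrite ?mem_nth ?vin ?eqxx.
apply/allP => e /(nthP [::])[j jE <-]; apply/implyP => vj.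
by have [_ /(_ v vj)[]] := minE _ jE.
Qed.

Definition count_size k (E : seq (seq nat)) := count (fun e => size e == k) E.

Lemma count_has_rank E k : own_edge_minimal E ->
  count (fun v => has_rank E v k) (iota 1 (size E)) = count_size k E.
Proof.
move=> minE; rewrite (eq_in_count (a2 := fun v => size (nth [::] E v.-1) == k)).
  rewrite (iotaDl 1 0) count_map /count_size -[in RHS](mkseq_nth [::] E) /mkseq count_map.
  exact: eq_count.
by move=> v; rewrite mem_iota add1n ltnS => vE; apply: has_rank_own_edge.
Qed.

Lemma Rk_count_size n h k : h \in hists n -> Rk k h = count_size k (rrh h).
Proof.
by move=> hn; rewrite /Rk -size_rrh (count_has_rank _ (own_edge_minimal_rrh hn)).
Qed.

Lemma count_size_rcons k E e :
  count_size k (rcons E e) = count_size k E + (size e == k).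
Proof. by rewrite /count_size -cats1 count_cat /= addn0. Qed.

Lemma count_size0 E : own_edge_minimal E -> count_size 0 E = 0.
Proof.
move=> minE; apply/eqP; rewrite -leqn0 leqNgt -has_count.
apply/negP => /(has_nthP [::])[j jE /eqP sz0].
by have := own_edge_size_gt0 minE jE; rewrite sz0.
Qed.

Lemma sum_count_size_extend E k x :
  \sum_(0 <= c < size E) count_size k.+1 (rcons E (x :: nth [::] E c))
  = size E * count_size k.+1 E + count_size k E.
Proof.
under eq_bigr do rewrite count_size_rcons /= eqSS.
rewrite big_split sum_nat_const_nat subn0 mulnC; congr (_ + _).
rewrite /count_size -[in RHS](mkseq_nth [::] E) /mkseq count_map -sum1_count.
by rewrite [RHS]big_mkcond /index_iota subn0; apply: eq_bigr => c _ /=; case: (_ == k).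
Qed.

Definition sum_Rk k n := \sum_(h <- hists n) Rk k h.

Lemma sum_Rk0 k : sum_Rk k 0 = (k == 1).
Proof. by rewrite /sum_Rk big_seq1; case: k => [|[|k]]. Qed.

Lemma sum_RkS k n : sum_Rk k.+1 n.+1 = n.+1 * sum_Rk k.+1 n + sum_Rk k n.
Proof.
rewrite /sum_Rk histsS -[iota 0 n.+1]/(index_iota 0 n.+1).
rewrite big_allpairs_dep big_distrr -big_split !big_seq /=; apply: eq_bigr => h hn.
rewrite !(Rk_count_size _ hn) -(size_mem_hists hn) -size_rrh.
rewrite -(sum_count_size_extend _ _ (size h).+2).
apply: eq_big_seq => c; rewrite mem_index_iota size_rrh (size_mem_hists hn).
move=> /andP[_ cn].
by rewrite (Rk_count_size _ (rcons_mem_hists hn cn)) rrh_rcons (size_mem_hists hn).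
Qed.

Lemma count_size1_rrh n h : h \in hists n -> count_size 1 (rrh h) = 1.
Proof.
move: n h; apply: hists_ind => // n h c hn cn IH.
rewrite rrh_rcons count_size_rcons IH /= eqSS.
have cE : c < size (rrh h) by rewrite size_rrh (size_mem_hists hn).
by have := own_edge_size_gt0 (own_edge_minimal_rrh hn) cE; case: (size _).
Qed.

Lemma sum_Rk_rank0 n : sum_Rk 0 n = 0.
Proof.
rewrite /sum_Rk big_seq big1 // => h hn.
by rewrite (Rk_count_size _ hn) (count_size0 (own_edge_minimal_rrh hn)).
Qed.

Local Open Scope ring_scope.

Lemma ER_sum_Rk k n : ER k n.+1 = (sum_Rk k n)%:R / (n`!)%:R.
Proof. by rewrite /ER size_hists /sum_Rk natr_sum. Qed.

Lemma ER_one k : ER k 1 = (k == 1%N)%:R.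
Proof. by rewrite ER_sum_Rk sum_Rk0 divr1. Qed.

Lemma ER_rank0 n : ER 0 n.+1 = 0.
Proof. by rewrite ER_sum_Rk sum_Rk_rank0 mul0r. Qed.

Lemma ER_recr k n : ER k.+1 n.+2 = ER k.+1 n.+1 + ER k n.+1 / n.+1%:R.
Proof.
rewrite !ER_sum_Rk sum_RkS factS natrD !natrM.
have nz : n.+1%:R != 0 :> rat by rewrite pnatr_eq0.
have fz : n`!%:R != 0 :> rat by rewrite pnatr_eq0 -lt0n fact_gt0.
by field; rewrite fz andbT addrC natr1.
Qed.

Section LiftMax.
Variable N : nat.
Local Notation lmax := (lift (@ord_max N)).
Let lmax_inj : injective lmax := @lift_inj _ ord_max.
Let inv_succ (j : nat) : rat := j.+1%:R^-1.

Lemma max_notin_lift_imset (T : {set 'I_N}) : ord_max \notin lmax @: T.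
Proof. by apply/imsetP => -[i _ /eqP]; rewrite (negbTE (neq_lift _ i)). Qed.

Lemma lift_preimsetK (T : {set 'I_N}) : lmax @^-1: (lmax @: T) = T.
Proof. by apply/setP => i; rewrite inE mem_imset //; apply: lift_inj. Qed.

Lemma lift_imset_preimset (S : {set 'I_N.+1}) : lmax @: (lmax @^-1: S) = S :\ ord_max.
Proof.
apply/setP => j; rewrite in_setD1; apply/imsetP/andP => [[i] | [jmax jS]].
  by rewrite inE => ? ->; rewrite eq_sym neq_lift.
case: (unliftP ord_max j) jmax jS => [i -> _ liS|->]; last by rewrite eqxx.
by exists i; rewrite ?inE.
Qed.

Lemma lift_preimsetU1 (T : {set 'I_N}) : lmax @^-1: (ord_max |: lmax @: T) = T.
Proof.
rewrite preimsetU lift_preimsetK; apply/setP => i.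
by rewrite !inE eq_sym (negbTE (neq_lift _ _)).
Qed.

Lemma prod_lift_imset (R : comPzSemiRingType) (T : {set 'I_N}) (F : nat -> R) :
  \prod_(j in lmax @: T) F j = \prod_(i in T) F i.
Proof.
rewrite big_imset; last exact: in2W lmax_inj.
by apply: eq_bigr => i _; rewrite lift_max.
Qed.

Lemma esum_inv_recr k : esum_inv k.+1 N.+1 = esum_inv k.+1 N + esum_inv k N / N.+1%:R.
Proof.
rewrite /esum_inv (bigID (fun S : {set 'I_N.+1} => ord_max \in S)) /= addrC.
congr (_ + _).
  rewrite (reindex_onto (fun T : {set 'I_N} => lmax @: T)
                        (fun S => lmax @^-1: S)) /=; last first.
    move=> S /andP[_ maxS]; rewrite lift_imset_preimset.
    by apply/setP => j; rewrite in_setD1; case: eqP => // ->; apply/esym/negbTE.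
  apply: eq_big => [T | T _]; last by rewrite (prod_lift_imset _ inv_succ).
  by rewrite (card_imset _ lmax_inj) max_notin_lift_imset lift_preimsetK eqxx !andbT.
rewrite (reindex_onto (fun T : {set 'I_N} => ord_max |: lmax @: T)
                      (fun S => lmax @^-1: S)) /=; last first.
  by move=> S /andP[_ maxS]; rewrite lift_imset_preimset setD1K.
rewrite mulr_suml; apply: eq_big => [T | T _].
  rewrite cardsU1 max_notin_lift_imset (card_imset _ lmax_inj) lift_preimsetU1 setU11.
  by rewrite eqxx !andbT add1n eqSS.
by rewrite big_setU1 ?max_notin_lift_imset //= (prod_lift_imset _ inv_succ) mulrC.
Qed.

End LiftMax.

Lemma esum_inv0 N : esum_inv 0 N = 1.
Proof.
rewrite /esum_inv (big_pred1 set0) ?big_set0 // => S.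
by rewrite /= cards_eq0.
Qed.

Lemma esum_inv_gt N k : (N < k)%N -> esum_inv k N = 0.
Proof.
move=> ltNk; rewrite /esum_inv big_pred0 // => S.
apply/negbTE; rewrite neq_ltn (leq_ltn_trans _ ltNk) //.
by rewrite -[X in (_ <= X)%N](card_ord N) max_card.
Qed.

Lemma harmS N : harm N.+1 = harm N + N.+1%:R^-1.
Proof. by rewrite /harm big_nat_recr. Qed.

Lemma harm2S N : harm2 N.+1 = harm2 N + (N.+1%:R ^+ 2)^-1.
Proof. by rewrite /harm2 big_nat_recr //= natrX. Qed.

Lemma esum_inv1 N : esum_inv 1 N = harm N.
Proof.
elim: N => [|N IH]; first by rewrite esum_inv_gt // /harm big_geq.
by rewrite esum_inv_recr IH esum_inv0 mul1r harmS.
Qed.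

Lemma esum_inv2 N : esum_inv 2 N = 2%:R^-1 * (harm N ^+ 2 - harm2 N).
Proof.
elim: N => [|N IH].
  by rewrite esum_inv_gt // /harm /harm2 !big_geq // expr0n subrr mulr0.
have nz : N.+1%:R != 0 :> rat by rewrite pnatr_eq0.
rewrite esum_inv_recr IH esum_inv1 harmS harm2S.
by field; rewrite addrC natr1.
Qed.

Lemma esum_inv_diag n : esum_inv n n = (n`!%:R)^-1.
Proof.
elim: n => [|n IH]; first by rewrite esum_inv0 invr1.
by rewrite esum_inv_recr IH esum_inv_gt // add0r factS natrM invfM mulrC.
Qed.

Lemma ER_esum_inv N k : ER k.+1 N.+1 = esum_inv k N.
Proof.
elim: N k => [|N IH] [|k].
- by rewrite ER_one esum_inv0.
- by rewrite ER_one esum_inv_gt.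
- by rewrite ER_recr ER_rank0 IH !esum_inv0 mul0r addr0.
- by rewrite ER_recr !IH esum_inv_recr.
Qed.

Theorem mainTheorem9 :
  (forall N k : nat, (1 <= N)%N -> (1 <= k)%N ->
     ER k.+1 N.+1 = esum_inv k N) /\
  (forall N : nat, (1 <= N)%N ->
     forall h, h \in hists N.-1 -> Rk 1 h = 1%N) /\
  (forall N : nat, (1 <= N)%N -> ER N N = ((N.-1)`!%:R)^-1) /\
  (forall N : nat, (1 <= N)%N ->
     ER 3 N.+1 = 2%:R^-1 * (harm N ^+ 2 - harm2 N)).
Proof.
split; first by move=> N k _ _; apply: ER_esum_inv.
split; first by move=> N _ h hn; rewrite (Rk_count_size _ hn) (count_size1_rrh hn).
split; first by case=> // n _; rewrite ER_esum_inv esum_inv_diag.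
by move=> N _; rewrite ER_esum_inv esum_inv2.
Qed.
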